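(* Let $(H,\langle\cdot,\cdot\rangle)$ be a real Hilbert space, regarded as an SSD space with bilinear form $\langle\cdot,\cdot\rangle$, so that $q(x)=\frac12\|x\|^2$. A nonempty set $A\subset H$ is $q$-representable if and only if $A$ is closed.
   Context: Every nonempty subset of $H$ is $q$-positive here since $q\ge0$. A nonempty set $A\subset H$ is $q$-representable if there exists a weakly lower semicontinuous (equivalently, since convex, norm lower semicontinuous) proper convex function $f:H\to\mathbb{R}\cup\{+\infty\}$ with $f\ge q$ on $H$ and $\{x: f(x)=q(x)\}=A$. *)

From HB Require Import structures.
From mathcomp Require Import all_boot all_order all_algebra.
From mathcomp Require Import all_classical all_reals all_analysis.
Set Implicit Arguments. Unset Strict Implicit. Unset Printing Implicit Defensive.
Import Order.TTheory GRing.Theory Num.Theory.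
Import numFieldNormedType.Exports.
Local Open Scope classical_set_scope.
Local Open Scope ring_scope.

Definition is_hilbert_inner (R : realType) (H : completeNormedModType R)
  (ip : H -> H -> R) : Prop :=
  [/\ (forall (a : R) (x y z : H), ip (a *: x + y) z = a * ip x z + ip y z),
      (forall x y : H, ip x y = ip y x) &
      (forall x : H, ip x x = `|x| ^+ 2)].

Definition qform (R : realType) (H : completeNormedModType R)
  (ip : H -> H -> R) (x : H) : R := ip x x / 2.

Local Open Scope ereal_scope.

Definition proper_fun (R : realType) (H : completeNormedModType R)
  (f : H -> \bar R) : Prop :=
  (forall x, f x != -oo) /\ (exists x, f x != +oo).

Definition convex_efun (R : realType) (H : completeNormedModType R)
  (f : H -> \bar R) : Prop :=
  forall (x y : H) (t : R), (0 < t)%R -> (t < 1)%R ->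
    f (t *: x + (1 - t) *: y)%R <= t%:E * f x + (1 - t)%:E * f y.

(* q-representable set (norm lower semicontinuity; equivalent to weak lsc
   for convex functions). *)
Definition q_representable (R : realType) (H : completeNormedModType R)
  (ip : H -> H -> R) (A : set H) : Prop :=
  exists f : H -> \bar R,
    [/\ lower_semicontinuous f, proper_fun f, convex_efun f,
        (forall x, (qform ip x)%:E <= f x) &
        [set x | f x = (qform ip x)%:E] = A].

From HB Require Import structures.
From mathcomp Require Import all_boot all_order all_algebra.
From mathcomp Require Import all_classical all_reals all_analysis.
From mathcomp Require Import ring lra.
Import Order.TTheory GRing.Theory Num.Theory.
Import numFieldNormedType.Exports.
Local Open Scope classical_set_scope.
Local Open Scope ring_scope.

(* The contact set {f = q} of a lower semicontinuous f >= q is closed, since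
   q is continuous.  Conversely, for a closed A let f be the supremum of the
   continuous affine functions lying below q on A.  It is convex, lower
   semicontinuous and >= q (tangents of q at every point lie below q), and
   f = q on A.  If b is outside A, some ball B(b, e) misses A; since
   q(a) - (q(b) + <b, a - b>) = |a - b|^2 / 2, the tangent at b raised by
   e^2 / 2 still lies below q on A, so f(b) > q(b). *)

Section semicontinuity.
Context {T : topologicalType} {R : realType}.
Local Open Scope ereal_scope.

Lemma closed_contact_set (f : T -> \bar R) (g : T -> R) :
  lower_semicontinuous f -> continuous g -> (forall x, (g x)%:E <= f x) ->
  closed [set x | f x = (g x)%:E].
Proof.
move=> lsc_f cont_g le_gf; rewrite -openC openE => x /= neq_fg.
have lt_gf : (g x)%:E < f x by rewrite lt_neqAle le_gf andbT; apply/eqP => /esym.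
have [a lt_af lt_ga] : exists2 a : R, a%:E < f x & (g x < a)%R.
  move: lt_gf; case: (f x) => [r| |] // => [|_].
    by rewrite lte_fin => ?; exists ((g x + r) / 2)%R; rewrite ?lte_fin; lra.
  by exists (g x + 1)%R; [exact: ltry | lra].
have [V Vx lt_aV] := lsc_f x a lt_af.
have : nbhs x (g @^-1` [set z | z < a]%R).
  by apply: cont_g; apply: open_nbhs_nbhs; split; [exact: open_lt|].
apply: filterS2 Vx => y Vy /= lt_gya eq_fg.
by have := lt_aV y Vy; rewrite eq_fg lte_fin ltNge ltW.
Qed.

Lemma lower_semicontinuous_sup_continuous (I : Type) (S : set I)
    (F : I -> T -> R) : (forall i, S i -> continuous (F i)) ->
  lower_semicontinuous (fun x => ereal_sup [set (F i x)%:E | i in S]).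
Proof.
move=> cont_F x a /ereal_sup_gt [_ [i Si <-]]; rewrite lte_fin => lt_aFi.
exists (F i @^-1` [set z | a < z]%R).
  by apply: cont_F => //; apply: open_nbhs_nbhs; split; [exact: open_gt|].
move=> y /= lt_aFiy; apply: lt_le_trans (ereal_sup_ubound _); last by exists i.
by rewrite lte_fin.
Qed.

End semicontinuity.

Section inner_product.
Context {R : realType} {H : completeNormedModType R} {ip : H -> H -> R}.
Hypothesis hip : is_hilbert_inner ip.

Lemma ip_sqnorm x : ip x x = `|x| ^+ 2.
Proof. by case: hip. Qed.

Lemma ipC x y : ip x y = ip y x.
Proof. by case: hip. Qed.

Lemma ipDl x y z : ip (x + y) z = ip x z + ip y z.
Proof. by case: hip => linear_ip _ _; rewrite -[x]scale1r linear_ip mul1r scale1r. Qed.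

Lemma ip0l z : ip 0 z = 0.
Proof. by apply/eqP; rewrite -[eqbLHS]subr0 -(subrr (ip 0 z)) -{2}[0]addr0 ipDl addrK. Qed.

Lemma ipZl a x z : ip (a *: x) z = a * ip x z.
Proof. by case: hip => linear_ip _ _; rewrite -[a *: x]addr0 linear_ip ip0l addr0. Qed.

Lemma ipDr x y z : ip z (x + y) = ip z x + ip z y.
Proof. by rewrite !(ipC z) ipDl. Qed.

Lemma ipZr a x z : ip z (a *: x) = a * ip z x.
Proof. by rewrite !(ipC z) ipZl. Qed.

Lemma ip_polarization x y : ip x y = (`|x + y| ^+ 2 - `|x| ^+ 2 - `|y| ^+ 2) / 2.
Proof. by rewrite -!ip_sqnorm ipDl !ipDr (ipC y x); field. Qed.

Lemma qformB x y : qform ip (x - y) = qform ip x - ip y x + qform ip y.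
Proof.
by rewrite /qform -(scaleN1r y) ipDl !ipDr !ipZl !ipZr (ipC x y); field.
Qed.

Let continuous_norm : continuous (fun y : H => `|y|).
Proof. by move=> y; exact: norm_continuous. Qed.

Lemma continuous_ipr x : continuous (ip x).
Proof.
pose shifted_norm y := `|x + y|.
have -> : ip x = ((shifted_norm \* shifted_norm) - cst (`|x| ^+ 2)
                   - ((fun y : H => `|y|) \* (fun y : H => `|y|))) \* cst 2^-1.
  by apply: funext => y; rewrite ip_polarization !expr2.
have cont_shifted_norm : continuous shifted_norm.
  move=> y; apply: continuous_comp; last exact: norm_continuous.
  exact: continuousD (cvg_cst x) cvg_id.
move=> y; apply: continuousM; last exact: cvg_cst.
apply: continuousB; last exact: continuousM (continuous_norm y) (continuous_norm y).
apply: continuousB; last exact: cvg_cst.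
exact: continuousM (cont_shifted_norm y) (cont_shifted_norm y).
Qed.

Lemma continuous_qform : continuous (qform ip).
Proof.
have -> : qform ip = ((fun y : H => `|y|) \* (fun y : H => `|y|)) \* cst 2^-1.
  by apply: funext => y; rewrite /qform ip_sqnorm expr2.
move=> y; apply: continuousM; last exact: cvg_cst.
exact: continuousM (continuous_norm y) (continuous_norm y).
Qed.

End inner_product.

Section quadratic_envelope.
Context {R : realType} {H : completeNormedModType R}.
Variable ip : H -> H -> R.
Hypothesis hip : is_hilbert_inner ip.
Variable A : set H.

(* A pair (u, c) stands for the affine function y |-> <u, y> + c. *)
Definition affine_minorants :=
  [set p : H * R | forall a, A a -> ip p.1 a + p.2 <= qform ip a].

Definition minorant_envelope (x : H) : \bar R :=
  ereal_sup [set (ip p.1 x + p.2)%:E | p in affine_minorants].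

Local Open Scope ereal_scope.

Lemma affine_minorant_le_envelope x [p : H * R] : affine_minorants p ->
  (ip p.1 x + p.2)%:E <= minorant_envelope x.
Proof. by move=> Sp; apply: ereal_sup_ubound; exists p. Qed.

Lemma lifted_tangent_affine_minorant b (e : R) :
  (forall a, A a -> e <= `|a - b|)%R -> (0 <= e)%R ->
  affine_minorants (b, - qform ip b + e ^+ 2 / 2)%R.
Proof.
move=> le_e_dist e_ge0 a /le_e_dist le_ea /=.
have := qformB hip a b; rewrite {1}/qform ip_sqnorm //.
have : (e ^+ 2 <= `|a - b| ^+ 2)%R by rewrite lerXn2r ?nnegrE.
lra.
Qed.

Lemma qform_le_envelope x : (qform ip x)%:E <= minorant_envelope x.
Proof.
have tangent_x : affine_minorants (x, - qform ip x + 0 ^+ 2 / 2)%R.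
  by apply: lifted_tangent_affine_minorant => // a _; rewrite normr_ge0.
apply: le_trans (affine_minorant_le_envelope x tangent_x).
by rewrite lee_fin /qform /= expr2 mul0r; lra.
Qed.

Lemma envelope_le_qform a : A a -> minorant_envelope a <= (qform ip a)%:E.
Proof. by move=> Aa; apply: ge_ereal_sup => _ [p Sp <-]; rewrite lee_fin; exact: Sp. Qed.

Lemma envelope_eq_qform a : A a -> minorant_envelope a = (qform ip a)%:E.
Proof. by move=> Aa; apply/le_anti; rewrite envelope_le_qform // qform_le_envelope. Qed.

Lemma qform_lt_envelope b : closed A -> ~ A b ->
  (qform ip b)%:E < minorant_envelope b.
Proof.
move=> closedA nAb.
have /nbhs_ballP [e /= e_gt0 ball_nA] : nbhs b (~` A).
  by apply: open_nbhs_nbhs; split => //; exact: closed_openC.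
have lifted_b : affine_minorants (b, - qform ip b + e ^+ 2 / 2)%R.
  apply: lifted_tangent_affine_minorant; last exact: ltW.
  move=> a Aa; rewrite leNgt; apply/negP => lt_dist_e.
  by apply: (ball_nA a) => //; rewrite -ball_normE /ball_ /= distrC.
apply: lt_le_trans (affine_minorant_le_envelope b lifted_b).
have : (0 < e ^+ 2)%R by exact: exprn_gt0.
by rewrite lte_fin /qform /=; lra.
Qed.

Lemma envelope_contact_set : closed A ->
  [set x | minorant_envelope x = (qform ip x)%:E] = A.
Proof.
move=> closedA; apply/seteqP; split => x /=.
  move=> eq_env; apply: contrapT => nAx.
  by have := qform_lt_envelope x closedA nAx; rewrite eq_env ltxx.
exact: envelope_eq_qform.
Qed.

Lemma lower_semicontinuous_envelope : lower_semicontinuous minorant_envelope.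
Proof.
apply: lower_semicontinuous_sup_continuous => p _ x.
exact: continuousD (continuous_ipr hip p.1 x) (cvg_cst _).
Qed.

Lemma convex_envelope : convex_efun minorant_envelope.
Proof.
move=> x y t t_gt0 t_lt1; apply: ge_ereal_sup => _ [p Sp <-].
have -> : (ip p.1 (t *: x + (1 - t) *: y) + p.2 =
    t * (ip p.1 x + p.2) + (1 - t) * (ip p.1 y + p.2))%R.
  by rewrite (ipDr hip) !(ipZr hip); ring.
rewrite EFinD !EFinM; apply: leeD; apply: lee_wpmul2l.
- by rewrite lee_fin ltW.
- exact: affine_minorant_le_envelope.
- by rewrite lee_fin subr_ge0 ltW.
- exact: affine_minorant_le_envelope.
Qed.

Lemma proper_envelope : A !=set0 -> proper_fun minorant_envelope.
Proof.
move=> [a Aa]; split=> [x|].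
  by rewrite gt_eqF //; apply: lt_le_trans (qform_le_envelope x); exact: ltNyr.
by exists a; rewrite envelope_eq_qform.
Qed.

End quadratic_envelope.

Theorem mainTheorem19 (R : realType) (H : completeNormedModType R)
  (ip : H -> H -> R) (hip : is_hilbert_inner ip) (A : set H) (hA : A !=set0) :
  q_representable ip A <-> closed A.
Proof.
split=> [[f [lsc_f _ _ qform_le_f <-]] | closedA].
  exact: closed_contact_set lsc_f (continuous_qform hip) qform_le_f.
exists (minorant_envelope ip A); split.
- exact: lower_semicontinuous_envelope.
- exact: proper_envelope.
- exact: convex_envelope.
- exact: qform_le_envelope.
- exact: envelope_contact_set.
Qed.
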